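(* Let $\mathbf{A}=(a_{ij})$ be a table with nonnegative entries, let $(R_1,\dots,R_k)$ be a proper partition of its row set and $(C_1,\dots,C_k)$ a proper partition of its column set, and set $s_{ab}=\sum_{i\in R_a}\sum_{j\in C_b}a_{ij}$ for $1\le a,b\le k$. Suppose the $k\times k$ matrix $(s_{ab})$ is an independent table, i.e. $s_{ab}=\big(\sum_{b'=1}^k s_{ab'}\big)\big(\sum_{a'=1}^k s_{a'b}\big)$ for all $a,b$. Then ${\mathrm{disc}}_\ell(\mathbf{A})\le{\mathrm{disc}}_1(\mathbf{A})$ for every $\ell=2,\dots,k$.
   Context: Standing assumptions: $\mathbf{A}$ is an $m\times n$ array of nonnegative entries whose total sum is $1$, and $\mathbf{A}$ is non-decomposable ($\mathbf{A}\mathbf{A}^T$ if $m\le n$, or $\mathbf{A}^T\mathbf{A}$ if $m>n$, is irreducible); in particular all row sums $d_{row,i}=\sum_j a_{ij}$ and column sums $d_{col,j}=\sum_i a_{ij}$ are positive. Let $R$ be the row set and $C$ the column set. For $X\subset R$, $Y\subset C$: ${\mathrm{Vol}}(X)=\sum_{i\in X}d_{row,i}$, ${\mathrm{Vol}}(Y)=\sum_{j\in Y}d_{col,j}$, $a(X,Y)=\sum_{i\in X}\sum_{j\in Y}a_{ij}$, and for nonempty $X,Y$, $\rho(X,Y)=\frac{a(X,Y)}{{\mathrm{Vol}}(X){\mathrm{Vol}}(Y)}$. For a proper $k$-partition $R_1,\dots,R_k$ of $R$ and $C_1,\dots,C_k$ of $C$ (all parts nonempty), and nonempty $X\subset R_a$,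 $Y\subset C_b$, ${\mathrm{disc}}(X,Y;R_a,C_b)=|\rho(X,Y)-\rho(R_a,C_b)|\sqrt{{\mathrm{Vol}}(X){\mathrm{Vol}}(Y)}$; ${\mathrm{disc}}(\mathbf{A};R_1,\dots,R_k,C_1,\dots,C_k)=\max_{1\le a,b\le k}\max_{X\subset R_a,\,Y\subset C_b}{\mathrm{disc}}(X,Y;R_a,C_b)$; and ${\mathrm{disc}}_k(\mathbf{A})$ is the minimum of this quantity over all proper $k$-partitions of the rows and of the columns. (For $k=1$ the partition is $R$, $C$ themselves.) *)

From mathcomp Require Import all_boot all_order all_algebra.
Set Implicit Arguments. Unset Strict Implicit. Unset Printing Implicit Defensive.
Import Order.TTheory GRing.Theory Num.Theory.
Local Open Scope ring_scope.

Section Defs.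
Variables (R : rcfType) (m n : nat) (A : 'M[R]_(m, n)).

Definition drow (i : 'I_m) : R := \sum_(j < n) A i j.
Definition dcol (j : 'I_n) : R := \sum_(i < m) A i j.

Definition volR (X : {set 'I_m}) : R := \sum_(i in X) drow i.
Definition volC (Y : {set 'I_n}) : R := \sum_(j in Y) dcol j.

Definition aXY (X : {set 'I_m}) (Y : {set 'I_n}) : R :=
  \sum_(i in X) \sum_(j in Y) A i j.

Definition rho X Y : R := aXY X Y / (volR X * volC Y).

Definition discXY (X : {set 'I_m}) (Y : {set 'I_n}) Ra Cb : R :=
  `|rho X Y - rho Ra Cb| * Num.sqrt (volR X * volC Y).

(* a k-partition of a finite index type is encoded by a labelling map into 'I_k;
   part a is the preimage of a; it is proper iff every part is nonempty *)
Definition part (T : finType) k (f : {ffun T -> 'I_k}) (a : 'I_k) : {set T} :=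
  [set x | f x == a].

Definition proper_part (T : finType) k (f : {ffun T -> 'I_k}) : bool :=
  [forall a, exists x, f x == a].

(* disc(A; R_1..R_k, C_1..C_k); all disc values are >= 0, so 0 is a neutral
   start for the max *)
Definition disc_part k (f : {ffun 'I_m -> 'I_k}) (g : {ffun 'I_n -> 'I_k}) : R :=
  \big[Num.max/0]_(a < k) \big[Num.max/0]_(b < k)
   \big[Num.max/0]_(X : {set 'I_m} | (X != set0) && (X \subset part f a))
    \big[Num.max/0]_(Y : {set 'I_n} | (Y != set0) && (Y \subset part g b))
      discXY X Y (part f a) (part g b).

(* disc_k(A): minimum of disc_part over all proper k-partitions of rows and
   columns (the list of values is nonempty whenever 1 <= k <= min(m,n);
   otherwise the value is the arbitrary default 0) *)
Definition disck (k : nat) : R :=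
  let s := [seq disc_part fg.1 fg.2 |
             fg <- enum [pred fg : {ffun 'I_m -> 'I_k} * {ffun 'I_n -> 'I_k} |
                          proper_part fg.1 && proper_part fg.2]] in
  \big[Num.min/head 0 s]_(x <- s) x.

Definition blocksum k (f : {ffun 'I_m -> 'I_k}) (g : {ffun 'I_n -> 'I_k}) a b : R :=
  aXY (part f a) (part g b).

End Defs.

Definition irreducible_mx (R : rcfType) (p : nat) (B : 'M[R]_p) : Prop :=
  forall i j : 'I_p, exists t : nat, 0 < (iter t (mulmx B) 1%:M) i j.

Definition nondecomposable (R : rcfType) (m n : nat) (A : 'M[R]_(m, n)) : Prop :=
  if (m <= n)%N then irreducible_mx (A *m A^T) else irreducible_mx (A^T *m A).

From mathcomp Require Import all_boot all_order all_algebra.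
Import Order.TTheory GRing.Theory Num.Theory.
Set Implicit Arguments. Unset Strict Implicit. Unset Printing Implicit Defensive.
Local Open Scope ring_scope.

(* Merge the k row parts and the k column parts into l groups by the same
   surjection 'I_k -> 'I_l.  A block of the merged partitions is a union of
   original blocks, and since a(R_a, C_b) = Vol(R_a) Vol(C_b) is a product of
   a row marginal and a column marginal, this factorisation survives summation:
   every merged block (P, Q) is again independent, i.e. rho(P, Q) = 1, which is
   also rho(R, C) because the entries sum to 1.  Hence each discrepancy term of
   the merged partitions is bounded by the corresponding term for the trivial
   partition, and disc_l <= disc(merged) <= disc_1. *)

Definition coarsen (T : finType) k l (h : 'I_k -> 'I_l) (f : {ffun T -> 'I_k}) :
  {ffun T -> 'I_l} := [ffun x => h (f x)].

Definition ord_clamp k l (a : 'I_k) : 'I_l.+1 := inord (minn a l).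

Lemma ord_clamp_surj k l : (l < k)%N ->
  forall b : 'I_l.+1, exists a : 'I_k, ord_clamp l a = b.
Proof.
move=> lk b; have bk : (b < k)%N := leq_trans (ltn_ord b) lk.
exists (Ordinal bk); apply: val_inj; rewrite /ord_clamp /= inordK.
  by apply/minn_idPl; rewrite -ltnS.
by rewrite ltnS geq_minr.
Qed.

Lemma proper_part_coarsen (T : finType) k l (h : 'I_k -> 'I_l) (f : {ffun T -> 'I_k}) :
  (forall b, exists a, h a = b) -> proper_part f -> proper_part (coarsen h f).
Proof.
move=> h_surj /forallP f_proper; apply/forallP => b; have [a <-] := h_surj b.
have /existsP[x /eqP fx] := f_proper a.
by apply/existsP; exists x; rewrite ffunE fx.
Qed.

Lemma proper_part_const (T : finType) (x : T) :
  proper_part ([ffun=> ord0] : {ffun T -> 'I_1}).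
Proof. by apply/forallP => a; apply/existsP; exists x; rewrite ffunE (ord1 a). Qed.

Lemma part_ord1 (T : finType) (f : {ffun T -> 'I_1}) : part f ord0 = setT.
Proof. by apply/setP => x; rewrite !inE; apply/eqP; apply: ord1. Qed.

Section PartitionSums.
Variables (V : nmodType) (T : finType) (k : nat) (f : {ffun T -> 'I_k}).

Lemma big_part (F : T -> V) : \sum_x F x = \sum_(a < k) \sum_(x in part f a) F x.
Proof.
rewrite (partition_big f xpredT) //; apply: eq_bigr => a _.
by apply: eq_bigl => x; rewrite inE.
Qed.

Lemma big_part_coarsen l (h : 'I_k -> 'I_l) (F : T -> V) b :
  \sum_(x in part (coarsen h f) b) F x = \sum_(a < k | h a == b) \sum_(x in part f a) F x.
Proof.
rewrite (partition_big f (fun a => h a == b)); last by move=> x; rewrite inE ffunE.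
apply: eq_bigr => a hab; apply: eq_bigl => x; rewrite !inE ffunE.
by case: (f x =P a) => [->|]; rewrite ?hab ?andbF.
Qed.

End PartitionSums.

Lemma sumr_subset_le (R : numDomainType) (T : finType) (F : T -> R) (X Y : {set T}) :
  (forall x, 0 <= F x) -> X \subset Y -> \sum_(x in X) F x <= \sum_(x in Y) F x.
Proof.
move=> F_ge0 XY; rewrite [leRHS](bigID (mem X)) /=.
have -> : \sum_(x in Y | x \in X) F x = \sum_(x in X) F x.
  by apply: eq_bigl => x; rewrite andb_idl // => /(subsetP XY).
by rewrite lerDl sumr_ge0.
Qed.

Lemma le_bigmin_head (R : realDomainType) (s : seq R) c x0 :
  x0 \in s -> {in s, forall x, c <= x} -> c <= \big[Num.min/head 0 s]_(x <- s) x.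
Proof.
case: s => [|x1 s] // _ s_lb; rewrite big_seq; apply: le_bigmin => [|x xs].
  by apply: s_lb; rewrite mem_head.
exact: s_lb.
Qed.

Definition indep_block (R : rcfType) m n (A : 'M[R]_(m, n))
  (P : {set 'I_m}) (Q : {set 'I_n}) :=
  aXY A P Q = volR A P * volC A Q.

Section Table.
Variables (R : rcfType) (m n : nat) (A : 'M[R]_(m, n)).

Lemma rho_setT : \sum_(i < m) \sum_(j < n) A i j = 1 -> rho A setT setT = 1.
Proof.
have sumT (T : finType) (F : T -> R) : \sum_(x in [set: T]) F x = \sum_x F x.
  by apply: eq_bigl => x; rewrite inE.
move=> A_sum; have volRT : volR A setT = 1 by rewrite /volR /drow sumT.
have volCT : volC A setT = 1 by rewrite /volC /dcol sumT exchange_big.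
have aXYT : aXY A setT setT = 1.
  by rewrite /aXY sumT; under eq_bigr => i _ do rewrite sumT.
by rewrite /rho volRT volCT aXYT mulr1 divr1.
Qed.

Lemma rho_indep P Q :
  indep_block A P Q -> volR A P * volC A Q != 0 -> rho A P Q = 1.
Proof. by rewrite /rho => -> /divff. Qed.

Section Coarsen.
Variables (k : nat) (f : {ffun 'I_m -> 'I_k}) (g : {ffun 'I_n -> 'I_k}).

Lemma volR_part a : volR A (part f a) = \sum_(b < k) aXY A (part f a) (part g b).
Proof.
rewrite /volR /drow; under eq_bigr => i _ do rewrite (big_part g).
by rewrite exchange_big.
Qed.

Lemma volC_part b : volC A (part g b) = \sum_(a < k) aXY A (part f a) (part g b).
Proof.
rewrite /volC /dcol; under eq_bigr => j _ do rewrite (big_part f (fun i => A i j)).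
by rewrite exchange_big; apply: eq_bigr => a _; rewrite /aXY exchange_big.
Qed.

Lemma indep_blocksP :
  (forall a b, blocksum A f g a b =
     (\sum_(b' < k) blocksum A f g a b') * (\sum_(a' < k) blocksum A f g a' b)) ->
  forall a b, indep_block A (part f a) (part g b).
Proof. by move=> hind a b; rewrite /indep_block volR_part volC_part; apply: hind. Qed.

Lemma aXY_coarsen l (h : 'I_k -> 'I_l) a b :
  aXY A (part (coarsen h f) a) (part (coarsen h g) b) =
  \sum_(a0 < k | h a0 == a) \sum_(b0 < k | h b0 == b) aXY A (part f a0) (part g b0).
Proof.
rewrite /aXY big_part_coarsen; apply: eq_bigr => a0 _.
under eq_bigr => i _ do rewrite big_part_coarsen.
by rewrite exchange_big.
Qed.

Lemma indep_coarsen l (h : 'I_k -> 'I_l) :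
  (forall a b, indep_block A (part f a) (part g b)) ->
  forall a b, indep_block A (part (coarsen h f) a) (part (coarsen h g) b).
Proof.
move=> indep a b; rewrite /indep_block aXY_coarsen /volR /volC !big_part_coarsen.
rewrite mulr_suml; apply: eq_bigr => a0 _.
by rewrite mulr_sumr; apply: eq_bigr => b0 _; apply: indep.
Qed.

End Coarsen.
End Table.

Section NonnegTable.
Variables (R : rcfType) (m n : nat) (A : 'M[R]_(m, n)).
Hypothesis A_nneg : forall i j, 0 <= A i j.
Hypothesis A_sum : \sum_(i < m) \sum_(j < n) A i j = 1.

Lemma volR_ge0 (X : {set 'I_m}) : 0 <= volR A X.
Proof. by do 2!apply: sumr_ge0 => ? _. Qed.

Lemma volC_ge0 (Y : {set 'I_n}) : 0 <= volC A Y.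
Proof. by do 2!apply: sumr_ge0 => ? _. Qed.

Lemma volR_subset (X P : {set 'I_m}) : X \subset P -> volR A X <= volR A P.
Proof. by apply: sumr_subset_le => i; apply: sumr_ge0. Qed.

Lemma volC_subset (Y Q : {set 'I_n}) : Y \subset Q -> volC A Y <= volC A Q.
Proof. by apply: sumr_subset_le => j; apply: sumr_ge0. Qed.

Lemma discXY_indep_le (X P : {set 'I_m}) (Y Q : {set 'I_n}) :
  X \subset P -> Y \subset Q -> indep_block A P Q ->
  discXY A X Y P Q <= discXY A X Y setT setT.
Proof.
move=> XP YQ indepPQ; rewrite /discXY.
(* When Vol P Vol Q = 0, rho P Q is the junk value x / 0 = 0, but then
   Vol X Vol Y = 0 as well and both sides vanish. *)
have [volPQ0|volPQ_neq0] := eqVneq (volR A P * volC A Q) 0.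
  have -> : volR A X * volC A Y = 0.
    move/eqP: volPQ0; rewrite mulf_eq0 => /orP[/eqP volP0|/eqP volQ0].
      have volX0 : volR A X = 0.
        by apply/le_anti; rewrite volR_ge0 andbT -volP0 volR_subset.
      by rewrite volX0 mul0r.
    have volY0 : volC A Y = 0.
      by apply/le_anti; rewrite volC_ge0 andbT -volQ0 volC_subset.
    by rewrite volY0 mulr0.
  by rewrite sqrtr0 !mulr0.
by rewrite (rho_indep indepPQ volPQ_neq0) rho_setT.
Qed.

Lemma disc_part_indep_le k (f : {ffun 'I_m -> 'I_k}) (g : {ffun 'I_n -> 'I_k})
    (f1 : {ffun 'I_m -> 'I_1}) (g1 : {ffun 'I_n -> 'I_1}) :
  (forall a b, indep_block A (part f a) (part g b)) ->
  disc_part A f g <= disc_part A f1 g1.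
Proof.
move=> indep; have disc1_ge0 : 0 <= disc_part A f1 g1 by apply: bigmax_ge_id.
rewrite /disc_part; apply: bigmax_le => // a _; apply: bigmax_le => // b _.
apply: bigmax_le => // X /andP[X0 XP]; apply: bigmax_le => // Y /andP[Y0 YQ].
apply: le_trans (discXY_indep_le XP YQ (indep a b)) _.
apply: (bigmax_sup ord0) => //; apply: (bigmax_sup ord0) => //; rewrite !part_ord1.
apply: (bigmax_sup X); first by rewrite X0 subsetT.
by apply: (bigmax_sup Y); rewrite ?Y0 ?subsetT.
Qed.

End NonnegTable.

Section DiscK.
Variables (R : rcfType) (m n l : nat) (A : 'M[R]_(m, n)).

Lemma disck_le_disc_part (f : {ffun 'I_m -> 'I_l}) (g : {ffun 'I_n -> 'I_l}) :
  proper_part f -> proper_part g -> disck A l <= disc_part A f g.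
Proof.
move=> pf pg; apply: ge_bigmin_seq => //; apply/mapP; exists (f, g) => //.
by rewrite mem_enum inE /= pf pg.
Qed.

Lemma le_disck c (f0 : {ffun 'I_m -> 'I_l}) (g0 : {ffun 'I_n -> 'I_l}) :
  proper_part f0 -> proper_part g0 ->
  (forall (f : {ffun 'I_m -> 'I_l}) (g : {ffun 'I_n -> 'I_l}),
     proper_part f -> proper_part g -> c <= disc_part A f g) ->
  c <= disck A l.
Proof.
move=> pf0 pg0 lb; apply: (@le_bigmin_head _ _ _ (disc_part A f0 g0)).
  by apply/mapP; exists (f0, g0); rewrite // mem_enum inE /= pf0 pg0.
move=> x /mapP[[f g]].
by rewrite mem_enum inE => /andP[pf pg] ->; apply: lb.
Qed.

End DiscK.

Theorem mainTheorem4 (R : rcfType) (m n k : nat) (A : 'M[R]_(m, n))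
  (A_nneg : forall i j, 0 <= A i j)
  (A_sum : \sum_(i < m) \sum_(j < n) A i j = 1)
  (A_nondec : nondecomposable A)
  (f : {ffun 'I_m -> 'I_k}) (g : {ffun 'I_n -> 'I_k})
  (hf : proper_part f) (hg : proper_part g)
  (hind : forall a b : 'I_k,
     blocksum A f g a b =
       (\sum_(b' < k) blocksum A f g a b') * (\sum_(a' < k) blocksum A f g a' b)) :
  forall l : nat, (2 <= l <= k)%N -> disck A l <= disck A 1.
Proof.
move=> [|l] // /andP[_ lk].
have h_surj := ord_clamp_surj lk.
have k_gt0 : (0 < k)%N := leq_trans (ltn0Sn l) lk.
have /existsP[i0 _] := forallP hf (Ordinal k_gt0).
have /existsP[j0 _] := forallP hg (Ordinal k_gt0).
apply: le_trans (disck_le_disc_part A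
  (proper_part_coarsen h_surj hf) (proper_part_coarsen h_surj hg)) _.
apply: (le_disck (proper_part_const i0) (proper_part_const j0)) => f1 g1 _ _.
apply: (disc_part_indep_le A_nneg A_sum).
exact: indep_coarsen (indep_blocksP hind).
Qed.
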